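(* Let $a\ge b\ge k$ be positive integers. Then, as elements of $\operatorname{Hom}_G(\Lambda^a\otimes\Lambda^b,\Lambda^a\otimes\Lambda^b)$, \[\phi_k=\sum_{t=0}^{k}(-1)^t\binom{b-t}{k-t}\Phi_t\qquad\text{and}\qquad\psi_k=\sum_{t=1}^{k}(-1)^{t-1}\binom{b-t}{k-t}\Phi_t.\]
   Context: $K$ is a field of characteristic zero, $G=GL(n,K)$, $V=K^n$, $\Lambda=\bigoplus_i\Lambda^i$ the exterior algebra of $V$. $m$ is multiplication and $\Delta_{s,t}:\Lambda^{s+t}\to\Lambda^s\otimes\Lambda^t$ the comultiplication component $v_1\cdots v_{s+t}\mapsto\sum_\sigma\mathrm{sgn}(\sigma)v_{\sigma(1)}\cdots v_{\sigma(s)}\otimes v_{\sigma(s+1)}\cdots v_{\sigma(s+t)}$ (permutations increasing on the first $s$ and last $t$ positions). For $0\le t\le b$: $\delta_t=(m\otimes1)\circ(1\otimes\Delta_{t,b-t}):\Lambda^a\otimes\Lambda^b\to\Lambda^{a+t}\otimes\Lambda^{b-t}$, $\theta_t=(1\otimes m)\circ(\Delta_{a,t}\otimes1):\Lambda^{a+t}\otimes\Lambda^{b-t}\to\Lambda^a\otimes\Lambda^b$, $\Phi_t=\theta_t\circ\delta_t$. $\phi_k$ is the composition $(m\otimes m)\circ(1\otimes\tau\otimes1)\circ(\Delta_{a-k,k}\otimes\Delta_{k,b-k}):\Lambda^a\otimes\Lambda^b\to\Lambda^a\otimes\Lambda^b$, where $\tau:\Lambda^k\otimes\Lambda^k\to\Lambda^k\otimes\Lambda^k$,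 $w\otimes z\mapsto z\otimes w$; and $\psi_k=\binom{b}{k}1_{\Lambda^a\otimes\Lambda^b}-\phi_k$. *)

From HB Require Import structures.
From mathcomp Require Import all_boot all_order all_algebra.
Set Implicit Arguments. Unset Strict Implicit. Unset Printing Implicit Defensive.
Import Order.TTheory GRing.Theory Num.Theory.
Local Open Scope ring_scope.

(* V = K^n with standard basis e_0,...,e_{n-1}.  For S : {set 'I_n}, e_S is the
   wedge of the e_i (i in S) in increasing order; these form a basis of
   Lambda^{#|S|}.  An element of Lambda (x) Lambda is represented by its
   coefficient function on the basis e_S (x) e_T. *)
Notation tens K n := {ffun {set 'I_n} * {set 'I_n} -> (GRing.regular K)}.

Definition bas (K : fieldType) n (S T : {set 'I_n}) : tens K n :=
  [ffun p => ((p == (S, T)) : bool)%:R].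

Definition linext (K : fieldType) n (f : {set 'I_n} -> {set 'I_n} -> tens K n)
  (x : tens K n) : tens K n := \sum_(p : {set 'I_n} * {set 'I_n}) x p *: f p.1 p.2.

(* e_S /\ e_T = wsign S T * e_(S :|: T): zero if S, T intersect, otherwise the
   sign of the shuffle sorting S ++ T, i.e. (-1)^#{(s,t) in S x T | s > t}. *)
Definition wsign (K : fieldType) n (S T : {set 'I_n}) : K :=
  if [disjoint S & T]
  then (-1) ^+ #|[set p in setX S T | (val p.2 < val p.1)%N]|
  else 0.

(* Delta_{s, #|U|-s}(e_U) = sum_{A subset U, #|A| = s} wsign A (U :\: A) e_A (x) e_(U:\:A) *)

(* delta_t = (m (x) 1) o (1 (x) Delta_{t, b-t}) *)
Definition delta (K : fieldType) n (t : nat) : tens K n -> tens K n :=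
  linext (fun S T =>
    \sum_(A : {set 'I_n} | (A \subset T) && (#|A| == t))
      (wsign K A (T :\: A) * wsign K S A) *: bas K (S :|: A) (T :\: A)).

(* theta_t = (1 (x) m) o (Delta_{a,t} (x) 1) on Lambda^{a+t} (x) Lambda^{b-t} *)
Definition theta (K : fieldType) n (a t : nat) : tens K n -> tens K n :=
  linext (fun P Q =>
    \sum_(B : {set 'I_n} | (B \subset P) && (#|B| == a))
      (wsign K B (P :\: B) * wsign K (P :\: B) Q) *: bas K B ((P :\: B) :|: Q)).

Definition Phi (K : fieldType) n (a t : nat) (x : tens K n) : tens K n :=
  theta a t (delta t x).

(* phi_k = (m (x) m) o (1 (x) tau (x) 1) o (Delta_{a-k,k} (x) Delta_{k,b-k}),
   tau(w (x) z) = z (x) w (no sign). *)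
Definition phi (K : fieldType) n (a k : nat) : tens K n -> tens K n :=
  linext (fun S T =>
    \sum_(A : {set 'I_n} | (A \subset S) && (#|A| == (a - k)%N))
    \sum_(C : {set 'I_n} | (C \subset T) && (#|C| == k))
      (wsign K A (S :\: A) * wsign K C (T :\: C) * wsign K A C
         * wsign K (S :\: A) (T :\: C))
      *: bas K (A :|: C) ((S :\: A) :|: (T :\: C))).

Definition psi (K : fieldType) n (a b k : nat) (x : tens K n) : tens K n :=
  'C(b, k)%:R *: x - phi a k x.

Definition in_bideg (K : fieldType) n (a b : nat) (x : tens K n) : Prop :=
  forall p, x p != 0 -> #|p.1| = a /\ #|p.2| = b.

(* Both sides are linear, so it suffices to compare them on a basis tensor
   e_S (x) e_T with |S| = a and |T| = b.  Every term of phi_k and of Phi_t is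
   then +- e_((S\D) u C) (x) e_(D u (T\C)) for some D in S\T and C in T\S with
   |C| = |D| = d.  In phi_k such a term arises once for each J in S n T of size
   k - d (J is exchanged with itself), in Phi_t once for each subset of
   (T\S)\C of size t - d (moved to the left by delta and back by theta), and
   the two signs differ by (-1)^d.  Comparing coefficients leaves the binomial
   identity  sum_t (-1)^t C(b-t, k-t) C(m-d, t-d) = (-1)^d C(b-m, k-d)  with
   m = |T\S|, which holds since |S n T| = b - m. *)

From HB Require Import structures.
From mathcomp Require Import all_boot all_order all_algebra.
From mathcomp Require Import zify ring.
Set Implicit Arguments. Unset Strict Implicit. Unset Printing Implicit Defensive.
Import Order.TTheory GRing.Theory Num.Theory.
Local Open Scope ring_scope.

Ltac mem_dec x :=
  repeat match goal with
  | H : is_true (_ \subset _) |- _ => move/subsetP: H => /(_ x) /implyP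
  | H : is_true [disjoint _ & _] |- _ =>
      rewrite -setI_eq0 in H; move/eqP/setP: H => /(_ x)
  | H : is_true (x \in _) |- _ => move: H
  | H : is_true (x \notin _) |- _ => move: H
  end;
  rewrite !inE;
  repeat match goal with |- context [?y \in ?A] => case: (y \in A) end;
  done.

Ltac set_dec :=
  let x := fresh "x" in
  match goal with
  | |- is_true [disjoint _ & _] => rewrite -setI_eq0; apply/eqP/setP
  | |- is_true (_ \subset _) => apply/subsetP
  | |- _ => apply/setP
  end; move=> x; mem_dec x.

Lemma signr_eqmod2 (R : pzRingType) (i j : nat) :
  i = j %[mod 2] -> (-1) ^+ i = (-1) ^+ j :> R.
Proof. by move=> eij; rewrite -signr_odd -modn2 eij modn2 signr_odd. Qed.

Section Inversions.
Variable n : nat.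
Implicit Types A B C X Y : {set 'I_n}.

Definition inversions X Y : nat :=
  #|[set p in setX X Y | (val p.2 < val p.1)%N]|.

Lemma inversionsE X Y :
  inversions X Y = (\sum_(x in X) \sum_(y in Y) (val y < val x))%N.
Proof.
rewrite /inversions -sum1dep_card.
transitivity (\sum_(x in X) \sum_(y | (y \in Y) && (val y < val x)%N) 1)%N.
  by rewrite pair_big_dep; apply: eq_bigl => -[x y]; rewrite !inE andbA.
by apply: eq_bigr => x _; rewrite big_mkcondr.
Qed.

Lemma inversionsUl A B C : [disjoint A & B] ->
  inversions (A :|: B) C = (inversions A C + inversions B C)%N.
Proof.
by move=> AB; rewrite !inversionsE -bigU //; apply: eq_bigl => x; rewrite !inE.
Qed.

Lemma inversionsUr A B C : [disjoint B & C] ->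
  inversions A (B :|: C) = (inversions A B + inversions A C)%N.
Proof.
move=> BC; rewrite !inversionsE -big_split; apply: eq_bigr => x _.
by rewrite -bigU //; apply: eq_bigl => y; rewrite !inE.
Qed.

Lemma inversionsC A B : [disjoint A & B] ->
  (inversions A B + inversions B A)%N = (#|A| * #|B|)%N.
Proof.
move=> AB; rewrite !inversionsE [X in (_ + X)%N]exchange_big -big_split /=.
rewrite -sum_nat_const; apply: eq_bigr => x xA; rewrite -big_split -sum1_card /=.
apply: eq_bigr => y yB.
have : x != y by apply: contraTneq yB => <-; rewrite (disjointFr AB).
by rewrite -val_eqE; case: ltngtP.
Qed.

End Inversions.

Section Signs.
Variables (K : fieldType) (n : nat).
Implicit Types A B C X Y : {set 'I_n}.

Lemma wsignE X Y :
  wsign K X Y = if [disjoint X & Y] then (-1) ^+ inversions X Y else 0.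
Proof. by []. Qed.

Lemma wsign_disjoint X Y : [disjoint X & Y] -> wsign K X Y = (-1) ^+ inversions X Y.
Proof. by rewrite wsignE => ->. Qed.

Lemma wsign_meet x X Y : x \in X -> x \in Y -> wsign K X Y = 0.
Proof.
by move=> xX xY; rewrite wsignE; case: ifP => // /disjointFr/(_ xX); rewrite xY.
Qed.

Lemma wsign0l X : wsign K set0 X = 1.
Proof. by rewrite wsign_disjoint ?inversionsE ?big_set0 // -setI_eq0 set0I. Qed.

Lemma wsign0r X : wsign K X set0 = 1.
Proof.
rewrite wsign_disjoint ?inversionsE -?setI_eq0 ?setI0 //.
by rewrite big1 // => x _; rewrite big_set0.
Qed.

Lemma wsignUl A B C : [disjoint A & B] ->
  wsign K (A :|: B) C = wsign K A C * wsign K B C.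
Proof.
move=> AB; rewrite !wsignE -!setI_eq0 setIUl setU_eq0 !setI_eq0.
by rewrite inversionsUl // exprD; do 2!case: [disjoint _ & C]; rewrite ?mulr0 ?mul0r.
Qed.

Lemma wsignUr A B C : [disjoint B & C] ->
  wsign K A (B :|: C) = wsign K A B * wsign K A C.
Proof.
move=> BC; rewrite !wsignE -!setI_eq0 setIUr setU_eq0 !setI_eq0.
by rewrite inversionsUr // exprD; do 2!case: [disjoint A & _]; rewrite ?mulr0 ?mul0r.
Qed.

End Signs.

Section SubsetSums.
Variables (T : finType) (V : nmodType).
Implicit Types (A C D I J U W X : {set T}) (F : {set T} -> V).

Lemma setDDK D X : D \subset X -> X :\: (X :\: D) = D.
Proof. by move=> DX; rewrite setDDr setDv set0U; apply/setIidPr. Qed.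

Lemma cardsU_disjoint A C : [disjoint A & C] -> #|A :|: C| = (#|A| + #|C|)%N.
Proof. by move/disjoint_setI0; rewrite cardsU => ->; rewrite cards0 subn0. Qed.

Lemma sum_subset_setD X (P : pred {set T}) F :
  \sum_(A : {set T} | (A \subset X) && P A) F A =
  \sum_(D : {set T} | (D \subset X) && P (X :\: D)) F (X :\: D).
Proof.
rewrite (reindex_onto (setD X) (setD X)) /=; last by move=> A /andP[/setDDK].
apply: eq_bigl => D; rewrite subsetDl andbC /= setDDr setDv set0U.
by rewrite (sameP eqP setIidPr).
Qed.

Lemma sum_subset_setU X U W F : [disjoint U & W] -> U :|: W = X ->
  \sum_(D : {set T} | D \subset X) F D =
  \sum_(D1 : {set T} | D1 \subset U) \sum_(D2 : {set T} | D2 \subset W) F (D1 :|: D2).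
Proof.
move=> UW <-; rewrite pair_big_dep /=.
rewrite (reindex_onto (fun p => p.1 :|: p.2) (fun D => (D :&: U, D :&: W))) /=;
  last by move=> D sD; rewrite -setIUr (setIidPl sD).
apply: eq_bigl => -[D1 D2] /=; apply/andP/andP => [[_ /eqP [<- <-]]|[sD1 sD2]].
  by rewrite !subsetIr.
split; first exact: setUSS.
by apply/eqP; congr (_, _); set_dec.
Qed.

Lemma sum_subset_restrict U W F : U \subset W ->
  (forall D, D \subset W -> ~~ (D \subset U) -> F D = 0) ->
  \sum_(D : {set T} | D \subset W) F D = \sum_(D : {set T} | D \subset U) F D.
Proof.
move=> UW F0; rewrite (bigID (fun D => D \subset U)) /= [X in _ + X]big1 ?addr0.
  by apply: eq_bigl => D; apply: andb_idl => /subset_trans; apply.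
by move=> D /andP[]; apply: F0.
Qed.

Lemma sum_subset_pairs W (G : {set T} -> {set T} -> V) :
  \sum_(A : {set T} | A \subset W) \sum_(D : {set T} | D \subset A) G A D =
  \sum_(C : {set T} | C \subset W) \sum_(D : {set T} | D \subset W :\: C) G (C :|: D) D.
Proof.
rewrite !pair_big_dep /=.
rewrite (reindex_onto (fun p => (p.1 :|: p.2, p.2)) (fun p => (p.1 :\: p.2, p.2))) /=;
  last by move=> [A D] /= /andP[_ DA]; congr (_, _); set_dec.
apply: eq_bigl => -[C D] /=; apply/andP/andP => [[/andP[sW sD] /eqP [eC]]|[sC sD]].
  by rewrite -eC; split; set_dec.
by split; [apply/andP; split | apply/eqP; congr (_, _)]; set_dec.
Qed.

Lemma sum_subset_card2 I (c d k : nat) (v : V) :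
  \sum_(J : {set T} | J \subset I)
    (if (d + #|J| == k)%N && (c + #|J| == k)%N then v else 0) =
  if (c == d) && (d <= k)%N then v *+ 'C(#|I|, k - d) else 0.
Proof.
case: ifP => [/andP[/eqP -> dk] | ncd].
  rewrite -big_mkcondr (eq_bigl (mem [set J : {set T} | J \subset I & #|J| == k - d]%N)).
    by rewrite sumr_const cards_draws.
  by move=> J; rewrite !inE andbb; congr andb; apply/eqP/eqP => ?; lia.
rewrite big1 // => J _; case: ifP => // /andP[/eqP dJ /eqP cJ].
suff : (c == d) && (d <= k)%N by rewrite ncd.
by apply/andP; split; [apply/eqP|]; lia.
Qed.

End SubsetSums.

Lemma sum_alternating_binomial (R : pzRingType) (m b k : nat) : (m <= b)%N ->
  \sum_(u < k.+1) (-1) ^+ u * ('C(b - u, k - u) * 'C(m, u))%:R = 'C(b - m, k)%:R :> R.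
Proof.
elim: m b k => [|m IHm] b k mb.
  rewrite big_ord_recl big1 => [|u _]; last by rewrite bin0n muln0 mulr0.
  by rewrite !subn0 bin0 muln1 mul1r addr0.
rewrite big_ord_recl !subn0 bin0 muln1 mul1r.
under eq_bigr => u _ do rewrite lift0 binS mulnDr natrD mulrDr.
rewrite big_split /= addrA.
have -> : 'C(b, k)%:R
    + \sum_(u < k) (-1) ^+ u.+1 * ('C(b - u.+1, k - u.+1) * 'C(m, u.+1))%:R
    = 'C(b - m, k)%:R :> R.
  rewrite -(IHm b k (ltnW mb)) big_ord_recl !subn0 bin0 muln1 expr0 mul1r.
  by congr (_ + _); apply: eq_bigr => u _; rewrite lift0.
case: k => [|k]; first by rewrite big_ord0 addr0 !bin0.
have -> : \sum_(u < k.+1) (-1) ^+ u.+1 * ('C(b - u.+1, k.+1 - u.+1) * 'C(m, u))%:R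
    = - 'C(b.-1 - m, k)%:R :> R.
  rewrite -IHm; last by lia.
  rewrite -sumrN; apply: eq_bigr => u _.
  by rewrite exprS mulN1r mulNr subSS subnS predn_sub.
have -> : (b.-1 - m = b - m.+1)%N by lia.
have -> : (b - m = (b - m.+1).+1)%N by lia.
by rewrite binS natrD addrK.
Qed.

Lemma sum_alternating_binomial_shift (R : pzRingType) (d m b k : nat) :
  (d <= k)%N -> (d <= m)%N -> (m <= b)%N ->
  \sum_(t < k.+1)
    (-1) ^+ t * 'C(b - t, k - t)%:R * (if (d <= t)%N then 'C(m - d, t - d)%:R else 0)
  = (-1) ^+ d * 'C(b - m, k - d)%:R :> R.
Proof.
move=> dk dm mb.
pose F t : R :=
  (-1) ^+ t * 'C(b - t, k - t)%:R * (if (d <= t)%N then 'C(m - d, t - d)%:R else 0).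
rewrite -(big_mkord xpredT F) (big_cat_nat (n := d)) //= {}/F; last by lia.
rewrite big_nat_cond big1 ?add0r => [|t /andP[/andP[_ td] _]]; last first.
  by rewrite leqNgt td mulr0.
rewrite -{1}(add0n d) big_addn (_ : k.+1 - d = (k - d).+1)%N; last by lia.
rewrite big_mkord (_ : b - m = b - d - (m - d))%N; last by lia.
rewrite -sum_alternating_binomial; last by lia.
rewrite mulr_sumr; apply: eq_bigr => u _.
rewrite leq_addl addnK (_ : b - (u + d) = b - d - u)%N; last by lia.
rewrite (_ : k - (u + d) = k - d - u)%N; last by lia.
by rewrite [(u + d)%N]addnC exprD natrM !mulrA.
Qed.

Section Coefficients.
Variables (K : fieldType) (n : nat).
Implicit Types S T C D J : {set 'I_n}.

(* [phi_coef S T D C] is the sign with which phi_k sends e_S (x) e_T to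
   e_((S\D) u C) (x) e_(D u (T\C)); [Phi_coef S T D C] is the sign of the term of
   Phi_t (e_S (x) e_T) in which delta moves C to the left and theta moves D to the
   right. *)
Definition phi_coef S T D C : K :=
  wsign K (S :\: D) D * wsign K C (T :\: C) * wsign K (S :\: D) C * wsign K D (T :\: C).

Definition Phi_coef S T D C : K :=
  wsign K C (T :\: C) * wsign K S C * (wsign K ((S :|: C) :\: D) D * wsign K D (T :\: C)).

Lemma phi_coef_eq0 S T D C J J' :
  D \subset S :\: T -> C \subset T :\: S -> J \subset S :&: T -> J' \subset S :&: T ->
  J != J' -> phi_coef S T (D :|: J) (C :|: J') = 0.
Proof.
move=> sD sC sJ sJ' JJ'; rewrite /phi_coef.
have [J'J | /subsetPn[x xJ' xNJ]] := boolP (J' \subset J).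
  have /subsetPn[x xJ xNJ'] : ~~ (J \subset J').
    by apply: contra JJ' => JJ'; rewrite eqEsubset JJ' J'J.
  by rewrite (@wsign_meet _ _ x (D :|: J)) ?mulr0 //; mem_dec x.
by rewrite (@wsign_meet _ _ x (S :\: (D :|: J)) (C :|: J')) ?mulr0 ?mul0r //; mem_dec x.
Qed.

Lemma phi_coef_shared S T D C J :
  D \subset S :\: T -> C \subset T :\: S -> J \subset S :&: T -> #|C| = #|D| ->
  phi_coef S T (D :|: J) (C :|: J) = phi_coef S T D C.
Proof.
move=> sD sC sJ CD; rewrite /phi_coef.
have -> : S :\: (D :|: J) = ((S :\: T) :\: D) :|: ((S :&: T) :\: J) by set_dec.
have -> : T :\: (C :|: J) = ((T :\: S) :\: C) :|: ((S :&: T) :\: J) by set_dec.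
have -> : S :\: D = ((S :\: T) :\: D) :|: (((S :&: T) :\: J) :|: J) by set_dec.
have -> : T :\: C = ((T :\: S) :\: C) :|: (((S :&: T) :\: J) :|: J) by set_dec.
rewrite !wsignUl ?wsignUr; try by set_dec.
rewrite !wsign_disjoint; try by set_dec.
rewrite !mulrA -!exprD; apply: signr_eqmod2.
have JD : [disjoint J & D] by set_dec.
have CJ : [disjoint C & J] by set_dec.
move: (inversionsC JD) (inversionsC CJ); rewrite CD; lia.
Qed.

Lemma Phi_coef_shared S T D C J :
  D \subset S :\: T -> C \subset T :\: S -> J \subset (T :\: S) :\: C ->
  Phi_coef S T (D :|: J) (C :|: J) = Phi_coef S T D C.
Proof.
move=> sD sC sJ; rewrite /Phi_coef.
have -> : T :\: (C :|: J) = ((T :\: S) :\: C :\: J) :|: (S :&: T) by set_dec.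
have -> : (S :|: (C :|: J)) :\: (D :|: J) = ((S :\: T) :\: D) :|: ((S :&: T) :|: C)
  by set_dec.
have -> : T :\: C = ((T :\: S) :\: C :\: J) :|: (J :|: (S :&: T)) by set_dec.
have -> : (S :|: C) :\: D = ((S :\: T) :\: D) :|: ((S :&: T) :|: C) by set_dec.
have eS : S = ((S :\: T) :\: D) :|: (D :|: (S :&: T)) by set_dec.
rewrite [in wsign K S (C :|: J)]eS [in wsign K S C]eS.
rewrite !wsignUl ?wsignUr; try by set_dec.
rewrite !wsign_disjoint; try by set_dec.
by rewrite !mulrA -!exprD; apply: signr_eqmod2; lia.
Qed.

Lemma phi_coefE S T D C :
  D \subset S :\: T -> C \subset T :\: S -> #|C| = #|D| ->
  phi_coef S T D C = (-1) ^+ #|D| * Phi_coef S T D C.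
Proof.
move=> sD sC CD; rewrite /phi_coef /Phi_coef.
have -> : S :\: D = ((S :\: T) :\: D) :|: (S :&: T) by set_dec.
have -> : T :\: C = ((T :\: S) :\: C) :|: (S :&: T) by set_dec.
have -> : (S :|: C) :\: D = ((S :\: T) :\: D) :|: ((S :&: T) :|: C) by set_dec.
have eS : S = ((S :\: T) :\: D) :|: (D :|: (S :&: T)) by set_dec.
rewrite [in wsign K S C]eS.
rewrite !wsignUl ?wsignUr; try by set_dec.
rewrite !wsign_disjoint; try by set_dec.
rewrite !mulrA -!exprD; apply: signr_eqmod2.
have DC : [disjoint D & C] by set_dec.
have DD : (#|D| * #|D| = #|D| %[mod 2])%N by rewrite !modn2 oddM andbb.
move: (inversionsC DC) DD; rewrite CD; lia.
Qed.

End Coefficients.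

Section Tensors.
Variables (K : fieldType) (n : nat).
Implicit Types (S T C D P Q : {set 'I_n}) (x : tens K n).

Lemma linext_is_linear (f : {set 'I_n} -> {set 'I_n} -> tens K n) : linear (linext f).
Proof.
move=> c u v; rewrite /linext scaler_sumr -big_split; apply: eq_bigr => p _.
by rewrite !ffunE scalerDl scalerA.
Qed.

HB.instance Definition _ f :=
  GRing.isLinear.Build K (tens K n) (tens K n) *:%R (linext f) (linext_is_linear f).

HB.instance Definition _ a k := GRing.Linear.on (@phi K n a k).
HB.instance Definition _ t := GRing.Linear.on (@delta K n t).
HB.instance Definition _ a t := GRing.Linear.on (@theta K n a t).
HB.instance Definition _ a t := GRing.Linear.copy (@Phi K n a t) (theta a t \o delta t).

Lemma linext_bas f P Q : linext f (bas K P Q) = f P Q.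
Proof.
rewrite /linext (bigD1 (P, Q)) //= big1 ?addr0; first by rewrite ffunE eqxx scale1r.
by move=> p /negbTE pPQ; rewrite ffunE pPQ scale0r.
Qed.

Lemma bas_expand_bideg a b x : in_bideg a b x ->
  x = \sum_(p : {set 'I_n} * {set 'I_n} | (#|p.1| == a) && (#|p.2| == b))
        x p *: bas K p.1 p.2.
Proof.
move=> xab; apply/ffunP => q; rewrite sum_ffunE.
rewrite (eq_bigr (fun p => if q == p then x p else 0)) => [|p _]; last first.
  by rewrite !ffunE -surjective_pairing; case: eqP => _; [exact: mulr1 | exact: mulr0].
have [qab | qNab] := boolP ((#|q.1| == a) && (#|q.2| == b)).
  rewrite (bigD1 q) //= eqxx big1 ?addr0 // => p /andP[_ /negbTE pq].
  by rewrite eq_sym pq.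
rewrite big1 => [|p pab]; last by case: eqP => // qp; move: qNab; rewrite qp pab.
by apply/eqP; apply: contraNT qNab => /xab[-> ->]; rewrite !eqxx.
Qed.

Definition bas_exchange S T D C : tens K n := bas K ((S :\: D) :|: C) (D :|: (T :\: C)).

Lemma phi_bas_complement a k S T : #|S| = a -> (k <= a)%N ->
  phi a k (bas K S T) =
  \sum_(D : {set 'I_n} | D \subset S) \sum_(C : {set 'I_n} | C \subset T)
    (if (#|D| == k) && (#|C| == k) then phi_coef K S T D C else 0)
      *: bas_exchange S T D C.
Proof.
move=> Sa ka; rewrite /phi linext_bas sum_subset_setD big_mkcondr.
apply: eq_bigr => D DS; rewrite setDDK // cardsDS // Sa big_mkcondr /=.
have := subset_leq_card DS; rewrite Sa => Da.
have -> : (a - #|D| == a - k)%N = (#|D| == k) by apply/eqP/eqP => ?; lia.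
case: eqP => _ /=; last by symmetry; apply: big1 => C _; exact: scale0r.
by apply: eq_bigr => C _; case: ifP; rewrite ?scale0r.
Qed.

Lemma phi_bas_split a k S T : #|S| = a -> (k <= a)%N ->
  phi a k (bas K S T) =
  \sum_(D : {set 'I_n} | D \subset S :\: T) \sum_(C : {set 'I_n} | C \subset T :\: S)
  \sum_(J : {set 'I_n} | J \subset S :&: T)
    (if (#|D| + #|J| == k)%N && (#|C| + #|J| == k)%N then phi_coef K S T D C else 0)
      *: bas_exchange S T D C.
Proof.
move=> Sa ka; rewrite phi_bas_complement //.
have [dS eS] : [disjoint S :\: T & S :&: T] /\ (S :\: T) :|: (S :&: T) = S.
  by split; set_dec.
have [dT eT] : [disjoint T :\: S & S :&: T] /\ (T :\: S) :|: (S :&: T) = T.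
  by split; set_dec.
under eq_bigr do rewrite (sum_subset_setU _ dT eT).
rewrite (sum_subset_setU _ dS eS); apply: eq_bigr => D sD.
rewrite exchange_big; apply: eq_bigr => C sC; apply: eq_bigr => J sJ.
rewrite (bigD1 J) //= big1 => [|J' /andP[sJ' J'J]]; last first.
  by rewrite phi_coef_eq0 ?if_same ?scale0r // eq_sym.
rewrite addr0 !cardsU_disjoint; try by set_dec.
case: ifP => [/andP[/eqP DJk /eqP CJk] | _]; last by rewrite !scale0r.
rewrite phi_coef_shared //; last by lia.
by congr (_ *: _); rewrite /bas_exchange; congr bas; set_dec.
Qed.

Lemma phi_bas_exchange a k S T : #|S| = a -> (k <= a)%N ->
  phi a k (bas K S T) =
  \sum_(D : {set 'I_n} | D \subset S :\: T) \sum_(C : {set 'I_n} | C \subset T :\: S)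
    (if (#|C| == #|D|) && (#|D| <= k)%N
     then phi_coef K S T D C *+ 'C(#|S :&: T|, k - #|D|) else 0)
      *: bas_exchange S T D C.
Proof.
move=> Sa ka; rewrite phi_bas_split //; apply: eq_bigr => D _; apply: eq_bigr => C _.
by rewrite -scaler_suml sum_subset_card2.
Qed.

Lemma delta_bas t S T :
  delta t (bas K S T) =
  \sum_(C : {set 'I_n} | C \subset T :\: S)
    (if #|C| == t then wsign K C (T :\: C) * wsign K S C else 0)
      *: bas K (S :|: C) (T :\: C).
Proof.
rewrite /delta linext_bas big_mkcondr (@sum_subset_restrict _ _ (T :\: S)) ?subsetDl //.
  by apply: eq_bigr => C _; case: ifP; rewrite ?scale0r.
move=> C sC /subsetPn[x xC xNTS]; case: ifP => // _.
by rewrite (@wsign_meet _ _ x S C) ?mulr0 ?scale0r //; mem_dec x.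
Qed.

Lemma theta_bas a t P Q : #|P| = (a + t)%N ->
  theta a t (bas K P Q) =
  \sum_(D : {set 'I_n} | D \subset P)
    (if #|D| == t then wsign K (P :\: D) D * wsign K D Q else 0)
      *: bas K (P :\: D) (D :|: Q).
Proof.
move=> Pat; rewrite /theta linext_bas sum_subset_setD big_mkcondr.
apply: eq_bigr => D DP; rewrite setDDK // cardsDS // Pat.
have -> : (a + t - #|D| == a)%N = (#|D| == t).
  by have := subset_leq_card DP; rewrite Pat => ?; apply/eqP/eqP => ?; lia.
by case: ifP; rewrite ?scale0r.
Qed.

Lemma Phi_bas a t S T : #|S| = a ->
  Phi a t (bas K S T) =
  \sum_(C : {set 'I_n} | C \subset T :\: S) \sum_(D : {set 'I_n} | D \subset S :|: C)
    (if (#|D| == t) && (#|C| == t) then Phi_coef K S T D C else 0)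
      *: bas K ((S :|: C) :\: D) (D :|: (T :\: C)).
Proof.
move=> Sa; rewrite /Phi delta_bas linear_sum; apply: eq_bigr => C sC.
rewrite linearZ /=; case: eqP => [Ct | _]; last first.
  by rewrite scale0r big1 // => D _; rewrite andbF scale0r.
rewrite theta_bas ?cardsU_disjoint ?Sa ?Ct //; last by set_dec.
rewrite scaler_sumr; apply: eq_bigr => D _; rewrite andbT scalerA.
by case: ifP; rewrite ?mulr0 ?scaler0.
Qed.

Lemma Phi_bas_split a t S T : #|S| = a ->
  Phi a t (bas K S T) =
  \sum_(D : {set 'I_n} | D \subset S :\: T) \sum_(C : {set 'I_n} | C \subset T :\: S)
  \sum_(J : {set 'I_n} | J \subset (T :\: S) :\: C)
    (if (#|D| + #|J| == t)%N && (#|C| + #|J| == t)%N then Phi_coef K S T D C else 0)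
      *: bas_exchange S T D C.
Proof.
move=> Sa; rewrite Phi_bas //.
transitivity (\sum_(A : {set 'I_n} | A \subset T :\: S)
  \sum_(D : {set 'I_n} | D \subset S :\: T) \sum_(J : {set 'I_n} | J \subset A)
    (if (#|D| + #|J| == t)%N && (#|A| == t) then Phi_coef K S T (D :|: J) A else 0)
      *: bas K ((S :|: A) :\: (D :|: J)) ((D :|: J) :|: (T :\: A))).
  apply: eq_bigr => A sA; rewrite (@sum_subset_setU _ _ _ S A); try by set_dec.
  rewrite (@sum_subset_restrict _ _ (S :\: T) S) ?subsetDl //; last first.
    move=> D sD /subsetPn[x xD xNST]; rewrite big1 // => J sJ.
    rewrite /Phi_coef (@wsign_meet _ _ x (D :|: J) (T :\: A)); last by mem_dec x.
      by rewrite !mulr0 if_same scale0r.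
    by rewrite inE xD.
  apply: eq_bigr => D sD; apply: eq_bigr => J sJ; rewrite cardsU_disjoint //; set_dec.
rewrite exchange_big; apply: eq_bigr => D sD; rewrite sum_subset_pairs.
apply: eq_bigr => C sC; apply: eq_bigr => J sJ.
rewrite cardsU_disjoint; last by set_dec.
case: ifP => _; last by rewrite !scale0r.
by rewrite Phi_coef_shared //; congr (_ *: _); rewrite /bas_exchange; congr bas; set_dec.
Qed.

Lemma Phi_bas_exchange a t S T : #|S| = a ->
  Phi a t (bas K S T) =
  \sum_(D : {set 'I_n} | D \subset S :\: T) \sum_(C : {set 'I_n} | C \subset T :\: S)
    (if (#|C| == #|D|) && (#|D| <= t)%N
     then Phi_coef K S T D C *+ 'C(#|T :\: S| - #|D|, t - #|D|) else 0)
      *: bas_exchange S T D C.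
Proof.
move=> Sa; rewrite Phi_bas_split //; apply: eq_bigr => D _; apply: eq_bigr => C sC.
by rewrite -scaler_suml sum_subset_card2 cardsDS //; case: ifP => // /andP[/eqP ->].
Qed.

Lemma phi_coef_binomial_sum b k S T D C :
  #|T| = b -> D \subset S :\: T -> C \subset T :\: S ->
  (if (#|C| == #|D|) && (#|D| <= k)%N
   then phi_coef K S T D C *+ 'C(#|S :&: T|, k - #|D|) else 0)
  = \sum_(t < k.+1) ((-1) ^+ t * 'C(b - t, k - t)%:R) *
      (if (#|C| == #|D|) && (#|D| <= t)%N
       then Phi_coef K S T D C *+ 'C(#|T :\: S| - #|D|, t - #|D|) else 0).
Proof.
move=> Tb sD sC; have [CD | _] /= := eqVneq #|C| #|D|; last first.
  by rewrite big1 // => t _; rewrite mulr0.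
have mb : (#|T :\: S| <= b)%N by rewrite -Tb subset_leq_card // subsetDl.
have Dm : (#|D| <= #|T :\: S|)%N by rewrite -CD subset_leq_card.
have -> : #|S :&: T| = (b - #|T :\: S|)%N by rewrite -Tb -(cardsID S T) setIC addnK.
have [Dk | kD] := leqP #|D| k; last first.
  by rewrite big1 // => t _; rewrite leqNgt (leq_ltn_trans _ kD) ?mulr0 // -ltnS.
rewrite phi_coefE // -mulrnAr -mulr_natr mulrCA.
rewrite -(sum_alternating_binomial_shift _ Dk Dm mb).
rewrite mulr_sumr; apply: eq_bigr => t _.
by case: ifP => _; rewrite ?mulr0 // -mulr_natr; ring.
Qed.

Lemma phi_bas_Phi a b k S T : #|S| = a -> #|T| = b -> (k <= a)%N ->
  phi a k (bas K S T)
    = \sum_(t < k.+1) ((-1) ^+ t * 'C(b - t, k - t)%:R) *: Phi a t (bas K S T).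
Proof.
move=> Sa Tb ka; rewrite phi_bas_exchange //.
under [RHS]eq_bigr => t _ do rewrite (Phi_bas_exchange t T Sa) scaler_sumr.
rewrite [RHS]exchange_big; apply: eq_bigr => D sD.
under [RHS]eq_bigr => t _ do rewrite scaler_sumr.
rewrite [RHS]exchange_big; apply: eq_bigr => C sC.
under [RHS]eq_bigr => t _ do rewrite scalerA.
by rewrite -scaler_suml (phi_coef_binomial_sum k Tb sD sC).
Qed.

Lemma Phi0_bas a S T : #|S| = a -> Phi a 0 (bas K S T) = bas K S T.
Proof.
move=> Sa; rewrite Phi_bas_exchange // (bigD1 set0) ?sub0set //=.
rewrite [X in _ + X]big1 ?addr0 => [|D /andP[_ D0]]; last first.
  by apply: big1 => C _; rewrite leqn0 cards_eq0 (negbTE D0) andbF scale0r.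
rewrite (bigD1 set0) ?sub0set //= [X in _ + X]big1 ?addr0 => [|C /andP[_ C0]]; last first.
  by rewrite cards0 cards_eq0 (negbTE C0) scale0r.
rewrite cards0 bin0 mulr1n /Phi_coef /bas_exchange !setD0 !setU0 set0U.
by rewrite !wsign0l !wsign0r !mulr1 scale1r.
Qed.

Lemma Phi0 a b x : in_bideg a b x -> Phi a 0 x = x.
Proof.
move=> xab; rewrite [in LHS](bas_expand_bideg xab) linear_sum [RHS](bas_expand_bideg xab).
by apply: eq_bigr => -[S T] /andP[/eqP Sa _]; rewrite linearZ /= (Phi0_bas _ Sa).
Qed.

End Tensors.

Theorem lemma4p3 (K : fieldType) (n a b k : nat) :
  [pchar K] =i pred0 ->
  (0 < k)%N -> (k <= b)%N -> (b <= a)%N ->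
  forall x : tens K n, in_bideg a b x ->
    phi a k x
      = \sum_(t < k.+1) ((-1) ^+ t * ('C(b - t, k - t))%:R) *: Phi a t x
    /\ psi a b k x
      = \sum_(1 <= t < k.+1) ((-1) ^+ t.-1 * ('C(b - t, k - t))%:R) *: Phi a t x.
Proof.
(* The identity holds over any field, and also for k = 0. *)
move=> _ _ kb ba x xab.
have phiE : phi a k x = \sum_(t < k.+1) ((-1) ^+ t * 'C(b - t, k - t)%:R) *: Phi a t x.
  rewrite (bas_expand_bideg xab) linear_sum.
  under [RHS]eq_bigr do rewrite [Phi _ _ _]linear_sum scaler_sumr.
  rewrite [RHS]exchange_big; apply: eq_bigr => -[S T] /andP[/eqP Sa /eqP Tb].
  rewrite linearZ /= (phi_bas_Phi K Sa Tb (leq_trans kb ba)) scaler_sumr.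
  by apply: eq_bigr => t _; rewrite [Phi _ _ (_ *: _)]linearZ_LR !scalerA mulrC.
split=> //; rewrite /psi phiE big_ord_recl expr0 mul1r !subn0 (Phi0 xab).
rewrite opprD addrA subrr add0r big_add1 /= big_mkord -sumrN; apply: eq_bigr => t _.
by rewrite /bump add1n exprS mulN1r mulNr scaleNr opprK.
Qed.
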